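(* If a $(v,[k_1,k_2,k_3],\lambda)$ Hadamard partitioned difference family exists, then no prime divisor of $(2k_1+1)(2k_2+1)(2k_3+1)$ is congruent to $5$ modulo $6$.
   Context: $G$ is a finite group of order $v$ written additively, with difference $x-y:=x+(-y)$. For $B\subseteq G$, $\Delta B$ is the multiset $\{x-y: x,y\in B, x\neq y\}$; for $\mathcal{F}=\{B_1,\dots,B_t\}$, $\Delta\mathcal{F}$ is the multiset union of the $\Delta B_i$. A $(v,[k_1,\dots,k_t],\lambda)$ partitioned difference family (PDF) is a collection $\{B_1,\dots,B_t\}$ of subsets partitioning some group $G$ of order $v$ with $|B_i|=k_i$ such that $\Delta\mathcal{F}$ contains every non-zero element of $G$ exactly $\lambda$ times. It is Hadamard (HPDF) if $v=2\lambda$. *)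

From mathcomp Require Import all_boot all_fingroup.
Set Implicit Arguments. Unset Strict Implicit. Unset Printing Implicit Defensive.
Local Open Scope group_scope.

(* The ambient group G of the paper is the whole finite group gT (order v = #|gT|).
   The paper writes G additively with x - y := x + (-y); in mathcomp's
   multiplicative notation this difference is x * y^-1 and 0 is 1. *)

Definition delta_count (gT : finGroupType) (B : {set gT}) (g : gT) : nat :=
  #|[set p : gT * gT | [&& p.1 \in B, p.2 \in B, p.1 != p.2 & p.1 * p.2^-1 == g]]|.

Definition is_PDF (gT : finGroupType) (t : nat) (B : 'I_t -> {set gT})
  (v : nat) (k : 'I_t -> nat) (lambda : nat) : Prop :=
  [/\ #|[set: gT]| = v,
      (forall i, #|B i| = k i),
      (forall i j, i != j -> [disjoint B i & B j]),
      (forall x : gT, exists i, x \in B i) &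
      (forall g : gT, g != 1 -> \sum_(i < t) delta_count (B i) g = lambda)].

Definition is_HPDF (gT : finGroupType) (t : nat) (B : 'I_t -> {set gT})
  (v : nat) (k : 'I_t -> nat) (lambda : nat) : Prop :=
  is_PDF B v k lambda /\ v = (2 * lambda)%N.

From mathcomp Require Import all_boot all_fingroup.
From mathcomp Require Import all_algebra all_field.
From mathcomp Require Import ring zify.
Set Implicit Arguments. Unset Strict Implicit. Unset Printing Implicit Defensive.
Import GRing.Theory.

(* Counting the differences of an HPDF with block sizes k_i gives
   2 * sum k_i^2 = (sum k_i)^2 + sum k_i.  For three blocks a, b, c this reads
   4(b - c)^2 + 3 = (2a + 1)(4(b + c) + 3 - 2a), so modulo a prime p dividing
   2a + 1, -3 is a square.  Then w = (sqrt(-3) - 1)/2 is a primitive cube root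
   of unity in F_p, which forces p = 1 mod 3. *)

Section DifferenceCounting.

Variable gT : finGroupType.
Implicit Type B : {set gT}.

Lemma delta_count1 B : delta_count B 1 = 0.
Proof.
apply/eqP; rewrite cards_eq0; apply/eqP/setP => p; rewrite !inE.
apply/negP => /and4P [_ _ neq_p /eqP p1p2V].
by move: neq_p; rewrite -(mulgKV p.2 p.1) p1p2V mul1g eqxx.
Qed.

Lemma sum_delta_count B : \sum_g delta_count B g = #|B| * (#|B| - 1).
Proof.
pose distinct_pair (p : gT * gT) := [&& p.1 \in B, p.2 \in B & p.1 != p.2].
transitivity (\sum_(p | distinct_pair p) 1).
  rewrite (partition_big (fun p : gT * gT => p.1 * p.2^-1)%g predT) //=.
  apply: eq_bigr => g _; rewrite /delta_count -sum1dep_card.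
  by apply: eq_bigl => p; rewrite /distinct_pair !andbA.
rewrite -(pair_big_dep (fun x => x \in B) (fun x y => (y \in B) && (x != y))
                       (fun _ _ => 1)).
rewrite -sum_nat_const; apply: eq_bigr => x xB.
rewrite (eq_bigl (mem (B :\ x))) => [|y]; last by rewrite !inE andbC eq_sym.
by rewrite sum1_card (cardsD1 x B) xB add1n subn1.
Qed.

Variables (t : nat) (B : 'I_t -> {set gT}) (v : nat) (k : 'I_t -> nat) (lambda : nat).
Hypothesis pdfB : is_PDF B v k lambda.

Lemma PDF_sum_sizes : \sum_i k i = v.
Proof.
have [<- card_B disj_B cover_B _] := pdfB.
rewrite cardsT -sum1_card.
under eq_bigr do rewrite -card_B -sum1_card.
rewrite (exchange_big_dep predT) //=; apply: eq_bigr => x _.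
have [i xBi] := cover_B x.
rewrite (bigD1 i) //= big1 // => j /andP [xBj neq_ji].
by move: (disj_B _ _ neq_ji) => /disjoint_setI0 /setP /(_ x); rewrite !inE xBj xBi.
Qed.

Lemma PDF_sum_pairs : \sum_i k i * (k i - 1) = (v - 1) * lambda.
Proof.
have [card_gT card_B _ _ delta_B] := pdfB.
transitivity (\sum_(g | g != 1%g) \sum_i delta_count (B i) g).
  rewrite exchange_big; apply: eq_bigr => i _.
  by rewrite -card_B -sum_delta_count (bigD1 1%g) //= delta_count1.
rewrite (eq_bigr (fun _ => lambda)) => [|g /delta_B //].
by rewrite sum_nat_const cardC1 -card_gT subn1 cardsT.
Qed.

End DifferenceCounting.

Lemma HPDF_sum_sizes_sq (gT : finGroupType) t (B : 'I_t -> {set gT}) v k lambda :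
  is_HPDF B v k lambda ->
  2 * \sum_i k i ^ 2 = (\sum_i k i) ^ 2 + \sum_i k i.
Proof.
move=> [pdfB v2l]; have pairs := PDF_sum_pairs pdfB.
have sq_split n : n ^ 2 = n * (n - 1) + n by case: n => // n; lia.
under [\sum_i k i ^ 2]eq_bigr do rewrite sq_split.
rewrite big_split /= pairs (PDF_sum_sizes pdfB) v2l; lia.
Qed.

Lemma big_ord3 (F : 'I_3 -> nat) : \sum_i F i = F ord0 + F (inord 1) + F (inord 2).
Proof.
rewrite !big_ord_recl big_ord0 addn0 addnA.
by congr (_ + F _ + F _); apply: val_inj; rewrite /= inordK.
Qed.

Section Residues.

Local Open Scope ring_scope.

Lemma sqrt_neg3_of_HPDF3_sizes (R : idomainType) (a b c : R) :
  2 * (a ^+ 2 + b ^+ 2 + c ^+ 2) = (a + b + c) ^+ 2 + (a + b + c) ->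
  (2 * a + 1) * (2 * b + 1) * (2 * c + 1) = 0 ->
  exists z : R, z ^+ 2 + 3 = 0.
Proof.
have sqrt_neg3 (x y z : R) :
    2 * (x ^+ 2 + y ^+ 2 + z ^+ 2) = (x + y + z) ^+ 2 + (x + y + z) ->
    2 * x + 1 = 0 -> (2 * (y - z)) ^+ 2 + 3 = 0.
  move=> sizes x_half.
  have -> : (2 * (y - z)) ^+ 2 + 3 = (2 * x + 1) * (4 * (y + z) + 3 - 2 * x)
      + 4 * (2 * (x ^+ 2 + y ^+ 2 + z ^+ 2) - (x + y + z) ^+ 2 - (x + y + z)) by ring.
  by rewrite x_half sizes; ring.
move=> sizes /eqP; rewrite !mulf_eq0 -!orbA => /or3P [] /eqP half.
- by exists (2 * (b - c)); apply: sqrt_neg3 sizes half.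
- exists (2 * (a - c)); apply: (sqrt_neg3 b a c) half.
  by rewrite (addrC b a) (addrC (b ^+ 2)).
- exists (2 * (a - b)); apply: (sqrt_neg3 c a b) half.
  by rewrite (addrC c a) (addrC (c ^+ 2)) (addrAC a c b) (addrAC (a ^+ 2)).
Qed.

Lemma cube_root_unity_of_sqrt_neg3 (F : fieldType) (z : F) :
  (2 : F) != 0 -> z ^+ 2 + 3 = 0 -> let w := (z - 1) / 2 in w ^+ 2 + w + 1 = 0.
Proof.
move=> two_neq0 sq_z w.
have -> : w ^+ 2 + w + 1 = (z ^+ 2 + 3) / 4.
  by rewrite /w; field; rewrite two_neq0 andbT (natrM F 2 2) mulf_neq0.
by rewrite sq_z mul0r.
Qed.

Lemma finField_card_mod3 (F : finFieldType) (w : F) :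
  (3 : F) != 0 -> w ^+ 2 + w + 1 = 0 -> (#|F| %% 3 = 1)%N.
Proof.
move=> three_neq0 cyclo_w.
have w3 : w ^+ 3 = 1.
  apply/eqP; rewrite -subr_eq0.
  have -> : w ^+ 3 - 1 = (w - 1) * (w ^+ 2 + w + 1) by ring.
  by rewrite cyclo_w mulr0.
have w_neq1 : w != 1.
  by apply: contraNneq three_neq0 => w1; apply/eqP; rewrite -cyclo_w w1; ring.
have := expf_card w; rewrite -(expr_mod _ w3).
have := ltn_pmod #|F| (isT : (0 < 3)%N); case: (#|F| %% 3)%N => [|[|[|//]]] //= _.
  by move=> w1; rewrite -w1 eqxx in w_neq1.
move=> /eqP; rewrite -subr_eq0.
have -> : w ^+ 2 - w = w * (w - 1) by ring.
rewrite mulf_eq0 subr_eq0 (negPf w_neq1) orbF.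
move=> /eqP w0; move: cyclo_w.
by rewrite w0 expr0n /= !add0r => /eqP; rewrite oner_eq0.
Qed.

End Residues.

Theorem corollary3p3 (gT : finGroupType) (B : 'I_3 -> {set gT})
  (v : nat) (k : 'I_3 -> nat) (lambda : nat) :
  is_HPDF B v k lambda ->
  forall p : nat, prime p ->
    p %| (2 * k ord0 + 1) * (2 * k (inord 1) + 1) * (2 * k (inord 2) + 1) ->
    p %% 6 != 5.
Proof.
move=> hpdfB p p_pr p_dvd; apply/eqP => p_mod6.
have charFp := pchar_Fp p_pr.
have small_neq0 n : (0 < n < 5)%N -> ((n%:R : 'F_p) != 0)%R.
  by move=> n_small; rewrite -(dvdn_pcharf charFp); apply/negP => /dvdn_leq; lia.
move: p_dvd; rewrite (dvdn_pcharf charFp) !(natrD, natrM) => /eqP p_dvd.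
have := HPDF_sum_sizes_sq hpdfB; rewrite !big_ord3.
move=> /(congr1 (fun n => n%:R : 'F_p)%R); rewrite !(natrD, natrM, natrX) => sizes.
have [z sq_z] := sqrt_neg3_of_HPDF3_sizes sizes p_dvd.
have := cube_root_unity_of_sqrt_neg3 (small_neq0 2%N isT) sq_z.
move=> /(finField_card_mod3 (small_neq0 3%N isT)).
by rewrite card_Fp // -(modn_dvdm p (isT : (3 %| 6)%N)) p_mod6.
Qed.
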